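(* Consider a two-asset G3M with weight $w\in(0,1)$ and fee parameter $\gamma\in(0,1)$, reserves $x_t,y_t>0$ and pool price $P_t=\frac{w}{1-w}\frac{y_t}{x_t}$, in which reserves change by continuous trades obeying $w\,\frac{dx}{x}+\gamma(1-w)\frac{dy}{y}=0$ when $dx<0$ (buying $X$ from the pool) and $\gamma w\frac{dx}{x}+(1-w)\frac{dy}{y}=0$ when $dx>0$ (selling $X$ to the pool). Let the reference price $S_t$ be continuous with $\gamma P_0\le S_0\le\gamma^{-1}P_0$, assume no noise traders, a frictionless reference market and continuous instantaneous arbitrage, and write $\ln P_t=\ln P_0+U_t-L_t$ and $Z_t=\ln(S_t/P_t)=\ln S_t-\ln P_0+L_t-U_t\in[\ln\gamma,-\ln\gamma]$, where $L_t,U_t$ are continuous non-decreasing with $L_0=U_0=0$, $L$ increasing only when $Z_t=\ln\gamma$ and $U$ only when $Z_t=-\ln\gamma$. Then: (a) $x_t$ and $y_t$ are predictable processes; (b) $x_t$ increases only when $Z_t=\ln\gamma$ and decreases only when $Z_t=-\ln\gamma$; $y_t$ increases only when $Z_t=-\ln\gamma$ and decreases only when $Z_t=\ln\gamma$; (c) $\ln x_t$ and $\ln y_t$ are continuous and of bounded variation on bounded subintervals of $[0,\infty)$; (d) $$d\ln x_t=\frac{1-w}{1-w+\gamma w}\,dL_t-\frac{\gamma(1-w)}{\gamma(1-w)+w}\,dU_t,\qquad d\ln y_t=\frac{w}{\gamma(1-w)+w}\,dU_t-\frac{\gamma w}{1-w+\gamma w}\,dL_t.$$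
   Context: $L_t$ (resp. $U_t$) is the cumulative decrease (resp. increase) of $\ln P_t$ due to arbitrage sales of $X$ to (resp. purchases of $X$ from) the pool. Time $t$ is a point of increase (decrease) of $x$ if there is $\delta>0$ with $x_{t-\delta_1}<x_{t+\delta_2}$ (resp. $>$) for all $\delta_1,\delta_2\in(0,\delta]$; $x$ ''increases only when $Z_t=a$'' if $Z_t=a$ at every point of increase. *)

From HB Require Import structures.
From mathcomp Require Import all_boot all_order all_algebra.
From mathcomp Require Import all_classical all_reals all_analysis.
Set Implicit Arguments. Unset Strict Implicit. Unset Printing Implicit Defensive.
Import Order.TTheory GRing.Theory Num.Theory.
Import numFieldNormedType.Exports.
Local Open Scope classical_set_scope.
Local Open Scope ring_scope.

Section G3M.
Context {R : realType}.

Definition poolP (w x y : R) : R := w / (1 - w) * (y / x).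

Definition point_of_increase (f : R -> R) (t : R) : Prop :=
  exists2 d : R, 0 < d & forall d1 d2 : R, 0 < d1 <= d -> 0 < d2 <= d ->
    f (t - d1) < f (t + d2).
Definition point_of_decrease (f : R -> R) (t : R) : Prop :=
  exists2 d : R, 0 < d & forall d1 d2 : R, 0 < d1 <= d -> 0 < d2 <= d ->
    f (t - d1) > f (t + d2).

Definition increases_only_when (f Z : R -> R) (a : R) : Prop :=
  forall t, 0 < t -> point_of_increase f t -> Z t = a.
Definition decreases_only_when (f Z : R -> R) (a : R) : Prop :=
  forall t, 0 < t -> point_of_decrease f t -> Z t = a.

Definition cont_nondecr0 (f : R -> R) : Prop :=
  [/\ {within `[0, +oo[, continuous f},
      (forall s t, 0 <= s -> s <= t -> f s <= f t) & f 0 = 0].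

Context {d : measure_display} {Omega : measurableType d}.

(** A filtration indexed by time R (only t >= 0 matters). *)
Definition filtration (F : R -> set (set Omega)) : Prop :=
  [/\ forall t, sigma_algebra setT (F t),
      forall t, F t `<=` measurable
    & forall s t, s <= t -> F s `<=` F t].

Definition adapted (F : R -> set (set Omega)) (X : R -> Omega -> R) : Prop :=
  forall t, 0 <= t -> forall B : set R, measurable B -> F t (X t @^-1` B).

Definition predictable_rects (F : R -> set (set Omega)) : set (set (R * Omega)) :=
  [set E | exists A, F 0 A /\ E = [set 0] `*` A] `|`
  [set E | exists s t A, [/\ 0 <= s, s < t, F s A & E = `]s, t] `*` A]].

Definition time_domain : set (R * Omega) := [set p | 0 <= p.1].

Definition predictable (F : R -> set (set Omega)) (X : R -> Omega -> R) : Prop :=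
  forall B : set R, measurable B ->
    <<s time_domain, predictable_rects F >>
      (time_domain `&` [set p | B (X p.1 p.2)]).

End G3M.

From HB Require Import structures.
From mathcomp Require Import all_boot all_order all_algebra.
From mathcomp Require Import all_classical all_reals all_analysis.
From mathcomp Require Import ring lra measurable_realfun.

(* The log-mispricing Z, kept in [ln g, -ln g], is z + L - U with
   z_t = ln S_t - ln P_0, and also z + c_A A - c_B B, because ln P_t is an
   explicit function of ln x_t and ln y_t; in both decompositions the first
   regulator grows only when Z = ln g and the second only when Z = -ln g.
   The difference D = L - c_A A = U - c_B B is continuous, and near any t > 0
   either L and A or U and B are flat, as Z cannot sit at both boundaries; so
   D is locally constant and D = D_0 = 0.  Substituting L = c_A A and
   U = c_B B into ln x = ln x_0 + A - B and the analogous formula for ln y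
   gives (d), and the monotonicity of A and B gives (b) and (c).
   For (a), (L, U) is the minimal solution of the two-sided Skorokhod problem
   for z, hence the limit of an alternating iteration of running suprema.
   Taken over rational times, these suprema keep L_t and U_t
   F_t-measurable, so x_t and y_t, explicit functions of x_0, y_0, L_t and
   U_t, are adapted; being continuous they are predictable, as limits of
   left-continuous step processes. *)

Set Implicit Arguments. Unset Strict Implicit. Unset Printing Implicit Defensive.
Import Order.TTheory GRing.Theory Num.Theory.
Import numFieldNormedType.Exports.
Local Open Scope classical_set_scope.
Local Open Scope ring_scope.

Section RealFunctions.
Context {R : realType}.
Implicit Types (f g h Z A B L U : R -> R) (a b c k p q t : R).

Lemma continuous_halfline_dist f t e :
  {within `[0, +oo[, continuous f} -> 0 <= t -> 0 < e ->
  exists2 del, 0 < del & forall s, 0 <= s -> `|s - t| < del -> `|f s - f t| < e.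
Proof.
move=> /subspace_continuousP /(_ t); rewrite /= in_itv /= andbT => cf t0 e0.
move: (cf t0) => /cvgrPdist_lt /(_ e e0).
rewrite near_withinE /= => /nbhs_ballP [del del0 H].
exists del => // s s0 st.
have := H s; rewrite /ball /= distrC st => /(_ isT).
by rewrite /= in_itv /= andbT s0 distrC => /(_ isT).
Qed.

Lemma within_continuousD (D : set R) f g :
  {within D, continuous f} -> {within D, continuous g} ->
  {within D, continuous (fun s => f s + g s)}.
Proof. by move=> cf cg s; apply: continuousD; [exact: cf|exact: cg]. Qed.

Lemma within_continuousN (D : set R) f :
  {within D, continuous f} -> {within D, continuous (fun s => - f s)}.
Proof. by move=> cf s; apply: continuousN; exact: cf. Qed.

Lemma within_continuousMl (D : set R) c f :
  {within D, continuous f} -> {within D, continuous (fun s => c * f s)}.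
Proof. by move=> cf s; apply: continuousM; [exact: cst_continuous|exact: cf]. Qed.

Lemma within_continuous_cst (D : set R) c : {within D, continuous (fun _ => c)}.
Proof. by move=> s; exact: cst_continuous. Qed.

Lemma eq_within_continuous (D : set R) f g : (forall s, D s -> f s = g s) ->
  {within D, continuous f} -> {within D, continuous g}.
Proof. by move=> fg; apply: subspace_eq_continuous => s; rewrite inE => /fg. Qed.

Lemma within_continuous_ln f : (forall t, 0 <= t -> 0 < f t) ->
  {within `[0, +oo[, continuous (fun t => ln (f t))} -> {within `[0, +oo[, continuous f}.
Proof.
move=> f0 cf; apply: (eq_within_continuous (f := expR \o (fun t => ln (f t)))) => [t|].
  by rewrite /= in_itv /= andbT => /f0 ft; rewrite lnK.
by apply: within_continuous_comp cf => ? _; exact: continuous_expR.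
Qed.

Lemma cont_nondecr0_ge0 f t : cont_nondecr0 f -> 0 <= t -> 0 <= f t.
Proof. by case=> _ nd f0 t0; rewrite -f0; apply: nd. Qed.

Definition locally_constant f t :=
  exists2 e, 0 < e & forall r, `|r - t| < e -> f r = f t.

Lemma nondecreasing_locally_constant f t :
  (forall r s, 0 <= r -> r <= s -> f r <= f s) -> 0 < t ->
  ~ point_of_increase f t -> locally_constant f t.
Proof.
move=> fnd t0 NP.
have [[d1 [d2 [/andP[d10 d1t] /andP[d20 d2t] fd]]]|H] := pselect (exists d1 d2,
   [/\ 0 < d1 <= t / 2, 0 < d2 <= t / 2 & f (t + d2) <= f (t - d1)]); last first.
  exfalso; apply: NP; exists (t / 2); first by rewrite divr_gt0.
  move=> d1 d2 h1 h2; rewrite ltNge; apply/negP => hle; apply: H.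
  by exists d1, d2.
have td0 : 0 <= t - d1 by lra.
exists (Num.min d1 d2); first by rewrite lt_min d10 d20.
move=> r; rewrite lt_min !ltr_norml => /andP[/andP[r1 _] /andP[_ r2]].
have r_ge : t - d1 <= r by lra.
have r_le : r <= t + d2 by lra.
have := fnd _ _ td0 r_ge; have := fnd _ _ (le_trans td0 r_ge) r_le.
have td1 : t - d1 <= t by lra.
have td2 : t <= t + d2 by lra.
have := fnd _ _ td0 td1; have := fnd _ _ (ltW t0) td2.
lra.
Qed.

Lemma cont_nondecr0_locally_constant f Z c t :
  cont_nondecr0 f -> increases_only_when f Z c -> 0 < t -> Z t <> c ->
  locally_constant f t.
Proof.
move=> [_ fnd _] inc t0 Zc; apply: nondecreasing_locally_constant => // H.
exact/Zc/inc.
Qed.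

Lemma locally_constant_eq f p q : p <= q -> {within `[p, q], continuous f} ->
  (forall r, p < r < q -> locally_constant f r) -> f q = f p.
Proof.
rewrite le_eqVlt => /orP[/eqP -> //|pq] cf lc.
have [|c _] := @MVT R f (fun _ => 0) p q pq _ cf; last first.
  by rewrite mul0r => /eqP; rewrite subr_eq0 => /eqP.
move=> r; rewrite in_itv /= => /lc [e e0 H].
apply: (@near_eq_is_derive _ _ _ (cst (f r)) f r 1 0).
by near=> s; rewrite /cst H //; near: s; apply/nbhs_ballP; exists e.
Unshelve. all: by end_near.
Qed.

Lemma bounded_variation_monotone_sum a b h g : a <= b ->
  {in `[a, b] &, {homo (fun t => h t + g t) : r s / r <= s}} ->
  {in `[a, b] &, {homo g : r s / r <= s}} -> bounded_variation a b h.
Proof.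
rewrite le_eqVlt => /orP[/eqP <-|ab] hg gnd; first exact: bounded_variationxx.
have -> : h = (fun t => h t + g t) \+ (\- g) by apply/funext => t /=; rewrite addrK.
apply: bounded_variationD => //; last apply: bounded_variationN.
  exact: nondecreasing_bounded_variation.
exact: nondecreasing_bounded_variation.
Qed.

Lemma locally_constantB f g c t : locally_constant f t -> locally_constant g t ->
  locally_constant (fun s => f s - c * g s) t.
Proof.
move=> [e1 e10 f1] [e2 e20 g2]; exists (Num.min e1 e2); first by rewrite lt_min e10 e20.
by move=> r; rewrite lt_min => /andP[r1 r2]; rewrite f1 // g2.
Qed.

Lemma eq_locally_constant f g t : 0 < t -> (forall s, 0 <= s -> f s = g s) ->
  locally_constant f t -> locally_constant g t.
Proof.
move=> t0 fg [e e0 fe]; exists (Num.min e t); first by rewrite lt_min e0 t0.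
move=> r; rewrite lt_min => /andP[re rt].
have r0 : 0 <= r by move: rt; rewrite ltr_norml => /andP[+ _]; lra.
by rewrite -fg // -fg ?(ltW t0) // fe.
Qed.

Lemma halfline_locally_constant_eq f t : {within `[0, +oo[, continuous f} ->
  (forall r, 0 < r -> locally_constant f r) -> 0 <= t -> f t = f 0.
Proof.
move=> cf lc t0; apply: locally_constant_eq => // [|r /andP[r0 _]]; last exact: lc.
by apply: continuous_subspaceW cf => r /=; rewrite !in_itv /= => /andP[-> _].
Qed.

Lemma increases_only_when_dominated h A Z c k :
  cont_nondecr0 A -> increases_only_when A Z c ->
  (forall r s, 0 <= r -> r <= s -> h s - h r <= k * (A s - A r)) ->
  increases_only_when h Z c.
Proof.
move=> Ac incA hA t t0 [d d0 hinc]; apply: contrapT => Zt.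
have [e e0 Aloc] := cont_nondecr0_locally_constant Ac incA t0 Zt.
set m := Num.min d (Num.min e t).
have m0 : 0 < m by rewrite !lt_min d0 e0 t0.
have md : m <= d by rewrite ge_min lexx.
have me : m <= e by rewrite !ge_min lexx orbT.
have mt : m <= t by rewrite !ge_min lexx !orbT.
have Atm : A (t - m / 2) = A t.
  by apply: Aloc; rewrite addrAC subrr add0r normrN gtr0_norm ?divr_gt0 //; lra.
have Atp : A (t + m / 2) = A t.
  by apply: Aloc; rewrite addrAC subrr add0r gtr0_norm ?divr_gt0 //; lra.
have := hinc (m / 2) (m / 2); rewrite divr_gt0 //= => /(_ _ _).
have := hA (t - m / 2) (t + m / 2); rewrite Atm Atp subrr mulr0.
lra.
Qed.

Lemma point_of_increase_ln f t : 0 < t -> (forall s, 0 <= s -> 0 < f s) ->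
  point_of_increase f t -> point_of_increase (fun s => ln (f s)) t.
Proof.
move=> t0 fpos [d d0 finc]; exists (Num.min d t) => [|d1 d2]; first by rewrite lt_min d0 t0.
rewrite !le_min => /and3P[d10 d1d d1t] /and3P[d20 d2d _].
by rewrite ltr_ln ?posrE ?finc ?d10 ?d20 //; apply: fpos; lra.
Qed.

Lemma point_of_decrease_ln f t : 0 < t -> (forall s, 0 <= s -> 0 < f s) ->
  point_of_decrease f t -> point_of_increase (fun s => - ln (f s)) t.
Proof.
move=> t0 fpos [d d0 fdec]; exists (Num.min d t) => [|d1 d2]; first by rewrite lt_min d0 t0.
rewrite !le_min => /and3P[d10 d1d d1t] /and3P[d20 d2d _].
by rewrite ltrN2 ltr_ln ?posrE ?fdec ?d10 ?d20 //; apply: fpos; lra.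
Qed.

Lemma first_level_time f t : {within `[0, +oo[, continuous f} ->
  (forall r s, 0 <= r -> r <= s -> f r <= f s) -> 0 <= t ->
  exists s, [/\ 0 <= s, s <= t, f s = f t & forall r, 0 <= r -> r < s -> f r < f t].
Proof.
move=> cf fnd t0.
pose E := [set r | 0 <= r /\ f t <= f r].
have lbE : has_lbound E by exists 0 => r [].
have Et : E t by split.
have infE : has_inf E by split; first by exists t.
have s0 : 0 <= inf E by apply: lb_le_inf => [|r []//]; exists t.
exists (inf E); split => //; first exact: ge_inf.
  apply/eqP; rewrite eq_le fnd ?ge_inf //= leNgt; apply/negP => fst.
  have [|del del0 fdel] := continuous_halfline_dist cf s0 (_ : 0 < f t - f (inf E)).
    by rewrite subr_gt0.
  have [r [r0 Er] rlt] := inf_adherent del0 infE.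
  have sr : inf E <= r by apply: ge_inf.
  have rs : `|r - inf E| < del by rewrite ger0_norm ?subr_ge0 //; lra.
  by move: (fdel r r0 rs); rewrite ltr_norml => /andP[_]; lra.
move=> r r0 rs; rewrite ltNge; apply/negP => ftr.
by have := ge_inf lbE (conj r0 ftr); rewrite leNgt rs.
Qed.

Lemma last_level_time f Z c t : cont_nondecr0 f -> increases_only_when f Z c ->
  0 <= t -> 0 < f t -> exists s, [/\ 0 < s, s <= t, Z s = c & f s = f t].
Proof.
move=> fc inc t0 ft0; have [cf fnd f0] := fc.
have [s [s0 st fst sfirst]] := first_level_time cf fnd t0.
have {s0}s0 : 0 < s.
  by rewrite lt_def s0 andbT; apply: contraTneq ft0 => s0'; rewrite -fst s0' f0 ltxx.
exists s; split => //; apply: contrapT => Zs.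
have [e e0 floc] := cont_nondecr0_locally_constant fc inc s0 Zs.
set r := s - Num.min e s / 2.
have m0 : 0 < Num.min e s by rewrite lt_min e0 s0.
have me : Num.min e s <= e by rewrite ge_min lexx.
have ms : Num.min e s <= s by rewrite ge_min lexx orbT.
have r0 : 0 <= r by rewrite /r; lra.
have rs : r < s by rewrite /r; lra.
have := sfirst r r0 rs; rewrite floc ?fst ?ltxx //.
by rewrite /r addrAC subrr add0r normrN gtr0_norm ?divr_gt0 //; lra.
Qed.

Lemma regulators_proportional Z L U A B a b cA cB : a != b ->
  cont_nondecr0 L -> cont_nondecr0 U -> cont_nondecr0 A -> cont_nondecr0 B ->
  increases_only_when L Z a -> increases_only_when A Z a ->
  increases_only_when U Z b -> increases_only_when B Z b ->
  (forall t, 0 <= t -> U t - L t = cB * B t - cA * A t) ->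
  forall t, 0 <= t -> L t = cA * A t /\ U t = cB * B t.
Proof.
move=> ab Lc Uc Ac Bc incL incA incU incB LU.
pose D t := L t - cA * A t.
have DU t : 0 <= t -> U t - cB * B t = D t by move=> /LU; rewrite /D; lra.
have D0 : D 0 = 0 by rewrite /D; case: Lc => _ _ ->; case: Ac => _ _ ->; rewrite mulr0 subr0.
have cD : {within `[0, +oo[, continuous D}.
  apply: within_continuousD; first by case: Lc.
  by apply/within_continuousN/within_continuousMl; case: Ac.
have Dloc r : 0 < r -> locally_constant D r.
  move=> r0; have [Za|Za] := eqVneq (Z r) a.
    have Zb : Z r <> b by move=> Zb; move: ab; rewrite -Za Zb eqxx.
    apply: (eq_locally_constant r0 DU); apply: locally_constantB.
      exact: cont_nondecr0_locally_constant Uc incU r0 Zb.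
    exact: cont_nondecr0_locally_constant Bc incB r0 Zb.
  have Za' : Z r <> a by exact/eqP.
  apply: locally_constantB.
    exact: cont_nondecr0_locally_constant Lc incL r0 Za'.
  exact: cont_nondecr0_locally_constant Ac incA r0 Za'.
move=> t t0; have := halfline_locally_constant_eq cD Dloc t0.
rewrite D0 => Dt; have := DU t t0; rewrite /D in Dt *; split; lra.
Qed.
End RealFunctions.

Section SkorokhodMinimality.
Context {R : realType}.
Variables (z Z L U l u : R -> R) (a b : R).
Hypotheses (Lc : cont_nondecr0 L) (Uc : cont_nondecr0 U).
Hypotheses (incL : increases_only_when L Z a) (incU : increases_only_when U Z b).
Hypothesis ZE : forall t, 0 <= t -> Z t = z t + L t - U t.
Hypotheses (l_bnd : forall t, 0 <= t -> 0 <= l t <= L t)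
  (u_bnd : forall t, 0 <= t -> 0 <= u t <= U t).
Hypotheses (l_ge : forall s t, 0 <= s -> s <= t -> a - z s + u s <= l t)
  (u_ge : forall s t, 0 <= s -> s <= t -> z s + l s - b <= u t).

Let gap t := 0 <= t /\ (l t < L t \/ u t < U t).

Lemma lower_gap_level t : 0 <= t -> l t < L t ->
  exists2 s, gap s & [/\ s <= t, Z s = a & u s < U s].
Proof.
move=> t0 lt; have Lt0 : 0 < L t by case/andP: (l_bnd t0) => l0 _; apply: le_lt_trans lt.
have [s [s0 st Zs Ls]] := last_level_time Lc incL t0 Lt0.
have us : u s < U s by have := ZE (ltW s0); have := l_ge (ltW s0) st; rewrite Zs; lra.
by exists s; split => //; [exact: ltW|right].
Qed.

Lemma upper_gap_level t : 0 <= t -> u t < U t ->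
  exists2 s, gap s & [/\ s <= t, Z s = b & l s < L s].
Proof.
move=> t0 ut; have Ut0 : 0 < U t by case/andP: (u_bnd t0) => u0 _; apply: le_lt_trans ut.
have [s [s0 st Zs Us]] := last_level_time Uc incU t0 Ut0.
have ls : l s < L s by have := ZE (ltW s0); have := u_ge (ltW s0) st; rewrite Zs; lra.
by exists s; split => //; [exact: ltW|left].
Qed.

Lemma gap_levels r : gap r ->
  exists s s', [/\ gap s, gap s', s <= r, s' <= r & Z s = a /\ Z s' = b].
Proof.
move=> [r0 [lr|ur]].
- have [s gs [sr Zs us]] := lower_gap_level r0 lr.
  have [s' gs' [s's Zs' _]] := upper_gap_level gs.1 us.
  by exists s, s'; split => //; apply: le_trans sr.
- have [s' gs' [s'r Zs' ls']] := upper_gap_level r0 ur.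
  have [s gs [ss' Zs _]] := lower_gap_level gs'.1 ls'.
  by exists s, s'; split => //; apply: le_trans s'r.
Qed.

Hypothesis ab : a < b.
Hypothesis cZ : {within `[0, +oo[, continuous Z}.

Lemma skorokhod_minimal t : 0 <= t -> l t = L t /\ u t = U t.
Proof.
(* At the infimum of the gap times, Z would be close to both a and b. *)
move=> t0; apply: contrapT => neq.
have gt : gap t.
  split => //; case/andP: (l_bnd t0) => _; case/andP: (u_bnd t0) => _.
  rewrite !le_eqVlt => /orP[/eqP ut|ut] /orP[/eqP lt|lt];
    by [case: (neq (conj lt ut))|right|left].
have lbG : has_lbound gap by exists 0 => r [].
have infG : has_inf gap by split; first by exists t.
have ts0 : 0 <= inf gap by apply: lb_le_inf => [|r []//]; exists t.
have ba2 : 0 < (b - a) / 2 by rewrite divr_gt0 // subr_gt0.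
have [del del0 Zts] := continuous_halfline_dist cZ ts0 ba2.
have [r gr rlt] := inf_adherent del0 infG.
have Znear v : gap v -> v <= r -> `|Z v - Z (inf gap)| < (b - a) / 2.
  move=> gv vr; apply: Zts; first exact: gv.1.
  by rewrite ger0_norm ?subr_ge0 ?ge_inf //; lra.
have [s [s' [gs gs' sr s'r [Zs Zs']]]] := gap_levels gr.
by have := Znear s gs sr; have := Znear s' gs' s'r; rewrite Zs Zs' !ltr_norml; lra.
Qed.
End SkorokhodMinimality.

Section RunningSup.
Context {R : realType}.
Implicit Types (G f v M : R -> R) (s t : R).

(* [rat_time t] enumerates t and the rationals of [0, t]: a supremum over it
   is countable, hence preserves measurability in the sample. *)
Definition rat_time t (n : nat) : R :=
  if n is n'.+1 then
    if @unpickle rat n' is Some q then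
      if (0 <= (ratr q : R)) && (ratr q <= t) then ratr q else t
    else t
  else t.

Lemma rat_time_itv t n : 0 <= t -> 0 <= rat_time t n <= t.
Proof.
move=> t0; case: n => [|n] /=; first by rewrite t0 lexx.
case: (unpickle n) => [q|]; last by rewrite t0 lexx.
by case: ifP => // _; rewrite t0 lexx.
Qed.

Lemma rat_timeE t (q : rat) : 0 <= (ratr q : R) <= t -> rat_time t (pickle q).+1 = ratr q.
Proof. by move=> h; rewrite /= pickleK h. Qed.

Definition running_sup G t : R := sup (range (fun n => Num.max 0 (G (rat_time t n)))).

Definition has_running_sup G t := has_ubound (range (fun n => Num.max 0 (G (rat_time t n)))).

Definition right_lsc G s :=
  forall e, 0 < e -> exists2 del, 0 < del & forall c, s < c -> c < s + del -> G s - e <= G c.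

Definition nondecreasing_under f M :=
  (forall t, 0 <= t -> 0 <= f t <= M t) /\ (forall s t, 0 <= s -> s <= t -> f s <= f t).

Lemma running_sup_le G t m : 0 <= t -> 0 <= m -> (forall c, 0 <= c -> c <= t -> G c <= m) ->
  has_running_sup G t /\ running_sup G t <= m.
Proof.
move=> t0 m0 Gm.
have ub : ubound (range (fun n => Num.max 0 (G (rat_time t n)))) m.
  move=> _ [n _ <-]; rewrite ge_max m0 /=.
  by have /andP[c0 ct] := rat_time_itv n t0; apply: Gm.
by split; [exists m|apply: ge_sup => //; exists (Num.max 0 (G (rat_time t 0))), 0%N].
Qed.

Lemma le_running_sup G t n : has_running_sup G t ->
  Num.max 0 (G (rat_time t n)) <= running_sup G t.
Proof. by move=> ub; apply: ub_le_sup => //; exists n. Qed.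

Lemma running_sup_ge0 G t : has_running_sup G t -> 0 <= running_sup G t.
Proof. by move=> ub; apply: le_trans (le_running_sup 0 ub); rewrite le_max lexx. Qed.

(* Right lower semicontinuity lets the rational times see the value at [s]. *)
Lemma running_sup_ge G s t : 0 <= s -> s <= t -> has_running_sup G t -> right_lsc G s ->
  Num.max 0 (G s) <= running_sup G t.
Proof.
move=> s0 st ub Gs; rewrite ge_max running_sup_ge0 //=.
move: st; rewrite le_eqVlt => /orP[/eqP st|st].
  by subst t; apply: le_trans (le_running_sup 0 ub); rewrite le_max lexx orbT.
rewrite leNgt; apply/negP => supG.
have [|del del0 Gdel] := Gs ((G s - running_sup G t) / 2).
  by rewrite divr_gt0 // subr_gt0.
have /rat_in_itvoo [q] : s < Num.min t (s + del) by rewrite lt_min st ltrDl del0.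
rewrite in_itv /= lt_min => /andP[sq /andP[qt qd]].
have q0t : 0 <= (ratr q : R) <= t by rewrite (le_trans s0 (ltW sq)) ltW.
have := le_running_sup (pickle q).+1 ub; rewrite rat_timeE // ge_max => /andP[_].
by have := Gdel _ sq qd; lra.
Qed.

Lemma right_lsc_continuousD f v s : 0 <= s -> {within `[0, +oo[, continuous f} ->
  (forall r t, 0 <= r -> r <= t -> v r <= v t) -> right_lsc (fun c => f c + v c) s.
Proof.
move=> s0 cf vnd e e0.
have [del del0 fdel] := continuous_halfline_dist cf s0 e0.
exists del => // c sc cd.
have c0 : 0 <= c by apply: le_trans (ltW sc).
have cs : `|c - s| < del by rewrite ger0_norm ?subr_ge0 ?(ltW sc) // ltrBlDl.
by have := fdel c c0 cs; have := vnd s c s0 (ltW sc); rewrite ltr_norml; lra.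
Qed.

Lemma running_sup_under f v M : {within `[0, +oo[, continuous f} ->
  (forall r t, 0 <= r -> r <= t -> v r <= v t) -> (forall t, 0 <= t -> 0 <= M t) ->
  (forall c t, 0 <= c -> c <= t -> f c + v c <= M t) ->
  nondecreasing_under (running_sup (fun c => f c + v c)) M /\
  forall t, 0 <= t -> has_running_sup (fun c => f c + v c) t.
Proof.
move=> cf vnd M0 fvM.
have supM t : 0 <= t -> has_running_sup (fun c => f c + v c) t /\
    running_sup (fun c => f c + v c) t <= M t.
  by move=> t0; apply: running_sup_le => // [|c c0 ct]; [exact: M0|exact: fvM].
split; last by move=> t /supM[].
split=> [t t0|s t s0 st]; first by have [ub ->] := supM t t0; rewrite running_sup_ge0.
have [ubs _] := supM s s0; have [ubt _] := supM t (le_trans s0 st).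
apply: ge_sup => [|_ [n _ <-]].
  by exists (Num.max 0 (f (rat_time s 0) + v (rat_time s 0))), 0%N.
have /andP[c0 cs] := rat_time_itv n s0.
by apply: running_sup_ge (le_trans cs st) ubt (right_lsc_continuousD _ cf vnd).
Qed.
End RunningSup.

Section SkorokhodIteration.
Context {R : realType}.

Fixpoint lower_iter (z : R -> R) (a b : R) (k : nat) : R -> R :=
  if k is k'.+1 then
    running_sup (fun s => a - z s + running_sup (fun c => z c - b + lower_iter z a b k' c) s)
  else fun _ => 0.

Definition upper_iter z a b k := running_sup (fun c => z c - b + lower_iter z a b k c).

Definition lower_regulator z a b t := sup (range (fun k => lower_iter z a b k t)).
Definition upper_regulator z a b t := sup (range (fun k => upper_iter z a b k t)).

Lemma lower_iterS z a b k :
  lower_iter z a b k.+1 = running_sup (fun s => a - z s + upper_iter z a b k s).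
Proof. by []. Qed.

Variables (z Z L U : R -> R) (a b : R).
Hypotheses (Lc : cont_nondecr0 L) (Uc : cont_nondecr0 U).
Hypothesis cz : {within `[0, +oo[, continuous z}.
Hypothesis ZE : forall t, 0 <= t -> Z t = z t + L t - U t.
Hypothesis Zab : forall t, 0 <= t -> a <= Z t <= b.

Local Notation li := (lower_iter z a b).
Local Notation ui := (upper_iter z a b).

Lemma upper_step_under l : nondecreasing_under l L ->
  nondecreasing_under (running_sup (fun c => z c - b + l c)) U /\
  forall t, 0 <= t -> has_running_sup (fun c => z c - b + l c) t.
Proof.
move=> [lL lnd]; apply: running_sup_under => // [|t|c t c0 ct].
- by apply: within_continuousD => //; exact: within_continuous_cst.
- exact: cont_nondecr0_ge0.
- have [_ Und _] := Uc; have := Und c t c0 ct.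
  by have := ZE c0; have := Zab c0; have := lL c c0; lra.
Qed.

Lemma lower_step_under u : nondecreasing_under u U ->
  nondecreasing_under (running_sup (fun c => a - z c + u c)) L /\
  forall t, 0 <= t -> has_running_sup (fun c => a - z c + u c) t.
Proof.
move=> [uU und]; apply: running_sup_under => // [|t|c t c0 ct].
- by apply: within_continuousD; [exact: within_continuous_cst|exact: within_continuousN].
- exact: cont_nondecr0_ge0.
- have [_ Lnd _] := Lc; have := Lnd c t c0 ct.
  by have := ZE c0; have := Zab c0; have := uU c c0; lra.
Qed.

Lemma iter_under k : nondecreasing_under (li k) L /\ nondecreasing_under (ui k) U.
Proof.
elim: k => [|k [_ /lower_step_under[lk _]]]; last by split=> //; exact: (upper_step_under lk).1.
have l0 : nondecreasing_under (li 0) L.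
  by split=> [t t0|//] /=; rewrite lexx cont_nondecr0_ge0.
by split=> //; exact: (upper_step_under l0).1.
Qed.

Lemma has_running_sup_iter k t : 0 <= t ->
  has_running_sup (fun c => z c - b + li k c) t /\
  has_running_sup (fun c => a - z c + ui k c) t.
Proof.
have [/upper_step_under[_ ubl] /lower_step_under[_ ubu]] := iter_under k.
by move=> t0; split; [exact: ubl|exact: ubu].
Qed.

Lemma iter_bounded t : 0 <= t ->
  has_ubound (range (fun k => li k t)) /\ has_ubound (range (fun k => ui k t)).
Proof.
move=> t0; split; [exists (L t)|exists (U t)] => _ [k _ <-].
  by have [[/(_ t t0)/andP[]]] := iter_under k.
by have [_ [/(_ t t0)/andP[]]] := iter_under k.
Qed.

Lemma le_lower_regulator k t : 0 <= t -> li k t <= lower_regulator z a b t.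
Proof. by move=> t0; apply: (ub_le_sup (iter_bounded t0).1); exists k. Qed.

Lemma le_upper_regulator k t : 0 <= t -> ui k t <= upper_regulator z a b t.
Proof. by move=> t0; apply: (ub_le_sup (iter_bounded t0).2); exists k. Qed.

Lemma regulators_under t : 0 <= t ->
  0 <= lower_regulator z a b t <= L t /\ 0 <= upper_regulator z a b t <= U t.
Proof.
move=> t0; split; apply/andP; split.
- exact: le_trans (le_lower_regulator 0 t0).
- apply: ge_sup => [|_ [k _ <-]]; first by exists (li 0 t), 0%N.
  by have [[/(_ t t0)/andP[]]] := iter_under k.
- apply: le_trans (le_upper_regulator 0 t0).
  by have [_ [/(_ t t0)/andP[]]] := iter_under 0.
- apply: ge_sup => [|_ [k _ <-]]; first by exists (ui 0 t), 0%N.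
  by have [_ [/(_ t t0)/andP[]]] := iter_under k.
Qed.

Lemma lower_regulator_ge s t : 0 <= s -> s <= t ->
  a - z s + upper_regulator z a b s <= lower_regulator z a b t.
Proof.
move=> s0 st; have t0 := le_trans s0 st.
suff : upper_regulator z a b s <= lower_regulator z a b t - (a - z s) by lra.
apply: ge_sup => [|_ [k _ <-]]; first by exists (ui 0 s), 0%N.
have [_ [_ und]] := iter_under k; have [_ ub] := has_running_sup_iter k t0.
have caz : {within `[0, +oo[, continuous (fun c => a - z c)}.
  by apply: within_continuousD; [exact: within_continuous_cst|exact: within_continuousN].
have := running_sup_ge s0 st ub (right_lsc_continuousD s0 caz und).
have := le_lower_regulator k.+1 t0; rewrite lower_iterS ge_max => + /andP[_].
lra.
Qed.

Lemma upper_regulator_ge s t : 0 <= s -> s <= t ->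
  z s + lower_regulator z a b s - b <= upper_regulator z a b t.
Proof.
move=> s0 st; have t0 := le_trans s0 st.
suff : lower_regulator z a b s <= upper_regulator z a b t - (z s - b) by lra.
apply: ge_sup => [|_ [k _ <-]]; first by exists (li 0 s), 0%N.
have [[_ lnd] _] := iter_under k; have [ub _] := has_running_sup_iter k t0.
have czb : {within `[0, +oo[, continuous (fun c => z c - b)}.
  by apply: within_continuousD => //; exact: within_continuous_cst.
have := running_sup_ge s0 st ub (right_lsc_continuousD s0 czb lnd).
have := le_upper_regulator k t0; rewrite /upper_iter ge_max => + /andP[_].
lra.
Qed.

Hypotheses (ab : a < b) (cZ : {within `[0, +oo[, continuous Z}).
Hypotheses (incL : increases_only_when L Z a) (incU : increases_only_when U Z b).

Lemma regulatorsE t : 0 <= t ->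
  lower_regulator z a b t = L t /\ upper_regulator z a b t = U t.
Proof.
apply: (skorokhod_minimal Lc Uc incL incU ZE) => // [r r0|r r0||].
- exact: (regulators_under r0).1.
- exact: (regulators_under r0).2.
- exact: lower_regulator_ge.
- exact: upper_regulator_ge.
Qed.
End SkorokhodIteration.

Section Measurability.
Context {R : realType} {d : measure_display} {Omega : measurableType d}.
Variable F : R -> set (set Omega).
Hypothesis HF : filtration F.
Implicit Types (f g : Omega -> R) (s t : R).

Definition Fmeasurable t f := forall B : set R, measurable B -> F t (f @^-1` B).

Lemma FmeasurableP t f :
  Fmeasurable t f <-> measurable_fun setT (f : g_sigma_algebraType (F t) -> R).
Proof.
have [/(_ t) Ft _ _] := HF.
split=> [mf _ B mB|mf B mB]; last first.
  have := mf measurableT B mB; rewrite setTI.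
  by change (<<s F t >> (f @^-1` B) -> F t (f @^-1` B)); rewrite sigma_algebra_id.
by rewrite setTI; change (<<s F t >> (f @^-1` B)); rewrite sigma_algebra_id //; apply: mf.
Qed.

Lemma Fmeasurable_mono s t f : s <= t -> Fmeasurable s f -> Fmeasurable t f.
Proof. by case: HF => _ _ mon st mf B mB; apply: mon st _ (mf B mB). Qed.

Lemma eq_Fmeasurable t f g : f =1 g -> Fmeasurable t f -> Fmeasurable t g.
Proof. by move=> /funext ->. Qed.

Lemma Fmeasurable_cst t c : Fmeasurable t (fun _ => c).
Proof. by apply/FmeasurableP; exact: measurable_cst. Qed.

Lemma FmeasurableD t f g :
  Fmeasurable t f -> Fmeasurable t g -> Fmeasurable t (fun w => f w + g w).
Proof. by move=> /FmeasurableP mf /FmeasurableP mg; apply/FmeasurableP/measurable_funD. Qed.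

Lemma FmeasurableN t f : Fmeasurable t f -> Fmeasurable t (fun w => - f w).
Proof. by move=> /FmeasurableP mf; apply/FmeasurableP; exact: measurableT_comp. Qed.

Lemma FmeasurableMl t c f : Fmeasurable t f -> Fmeasurable t (fun w => c * f w).
Proof. by move=> /FmeasurableP mf; apply/FmeasurableP/measurable_funM. Qed.

Lemma Fmeasurable_ln t f : Fmeasurable t f -> Fmeasurable t (fun w => ln (f w)).
Proof.
by move=> /FmeasurableP mf; apply/FmeasurableP; exact: measurableT_comp (@measurable_ln R) _.
Qed.

Lemma Fmeasurable_expR t f : Fmeasurable t f -> Fmeasurable t (fun w => expR (f w)).
Proof.
by move=> /FmeasurableP mf; apply/FmeasurableP; exact: measurableT_comp (@measurable_expR R) _.
Qed.

Lemma Fmeasurable_max t f g :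
  Fmeasurable t f -> Fmeasurable t g -> Fmeasurable t (fun w => Num.max (f w) (g w)).
Proof. by move=> /FmeasurableP mf /FmeasurableP mg; apply/FmeasurableP/measurable_maxr. Qed.

Lemma Fmeasurable_of_ln t (X X0 V : Omega -> R) : 0 <= t -> (forall w, 0 < X w) ->
  Fmeasurable 0 X0 -> Fmeasurable t V -> (forall w, ln (X w) - ln (X0 w) = V w) ->
  Fmeasurable t X.
Proof.
move=> t0 X0' mX0 mV XV.
apply: (eq_Fmeasurable (f := fun w => expR (ln (X0 w) + V w))) => [w|].
  by rewrite -XV addrC subrK lnK // posrE.
by apply/Fmeasurable_expR/FmeasurableD => //; exact/(Fmeasurable_mono t0)/Fmeasurable_ln.
Qed.

Lemma Fmeasurable_sup t (h : nat -> Omega -> R) :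
  (forall w, has_ubound (range (h ^~ w))) -> (forall n, Fmeasurable t (h n)) ->
  Fmeasurable t (fun w => sup (range (h ^~ w))).
Proof.
move=> ub mh; apply/FmeasurableP.
have -> : (fun w => sup (range (h ^~ w))) = (fun w => sups (h ^~ w) 0%N).
  apply/funext => w; rewrite /sups /=; congr sup.
  by apply/seteqP; split => _ [n _ <-]; exists n.
by apply: measurable_fun_sups => [w _|n]; [exact: ub|exact/FmeasurableP].
Qed.

Lemma Fmeasurable_running_sup t (G : Omega -> R -> R) : 0 <= t ->
  (forall w, has_running_sup (G w) t) ->
  (forall c, 0 <= c -> c <= t -> Fmeasurable t (fun w => G w c)) ->
  Fmeasurable t (fun w => running_sup (G w) t).
Proof.
move=> t0 ub mG.
apply: (Fmeasurable_sup (h := fun n w => Num.max 0 (G w (rat_time t n)))) => // n.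
apply: Fmeasurable_max; first exact: Fmeasurable_cst.
by have /andP[c0 ct] := rat_time_itv n t0; apply: mG.
Qed.

Section Regulators.
Local Unset Implicit Arguments.
Variables (z Z L U : R -> Omega -> R) (a b : R).
Hypothesis mz : forall s, 0 <= s -> Fmeasurable s (z s).
Hypotheses (Lc : forall w, cont_nondecr0 (L^~ w)) (Uc : forall w, cont_nondecr0 (U^~ w)).
Hypothesis cz : forall w, {within `[0, +oo[, continuous z^~ w}.
Hypothesis ZE : forall w t, 0 <= t -> Z t w = z t w + L t w - U t w.
Hypothesis Zab : forall w t, 0 <= t -> a <= Z t w <= b.

Local Notation li w := (lower_iter (z^~ w) a b).
Local Notation ui w := (upper_iter (z^~ w) a b).

Lemma Fmeasurable_upper_step k t : 0 <= t ->
  (forall c, 0 <= c -> Fmeasurable c (fun w => li w k c)) ->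
  Fmeasurable t (fun w => ui w k t).
Proof.
move=> t0 ml; apply: Fmeasurable_running_sup => // [w|c c0 ct].
  exact: (has_running_sup_iter (Lc w) (Uc w) (cz w) (ZE w) (Zab w) k t0).1.
apply: (Fmeasurable_mono ct); apply: FmeasurableD; last exact: ml.
by apply: FmeasurableD; [exact: mz|exact: Fmeasurable_cst].
Qed.

Lemma Fmeasurable_iter k t : 0 <= t ->
  Fmeasurable t (fun w => li w k t) /\ Fmeasurable t (fun w => ui w k t).
Proof.
elim: k t => [|k IH] t t0.
  have ml c : 0 <= c -> Fmeasurable c (fun w => li w 0 c) by move=> _; exact: Fmeasurable_cst.
  by split; [exact: ml|exact: Fmeasurable_upper_step _ _ t0 ml].
have ml c : 0 <= c -> Fmeasurable c (fun w => li w k.+1 c).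
  move=> c0; apply: Fmeasurable_running_sup => // [w|r r0 rc].
    exact: (has_running_sup_iter (Lc w) (Uc w) (cz w) (ZE w) (Zab w) k c0).2.
  apply: (Fmeasurable_mono rc); apply: FmeasurableD; last exact: (IH r r0).2.
  by apply: FmeasurableD; [exact: Fmeasurable_cst|apply: FmeasurableN; exact: mz].
by split; [exact: ml|exact: Fmeasurable_upper_step _ _ t0 ml].
Qed.

Hypotheses (ab : a < b) (cZ : forall w, {within `[0, +oo[, continuous Z^~ w}).
Hypotheses (incL : forall w, increases_only_when (L^~ w) (Z^~ w) a)
  (incU : forall w, increases_only_when (U^~ w) (Z^~ w) b).

Lemma Fmeasurable_regulators t : 0 <= t -> Fmeasurable t (L t) /\ Fmeasurable t (U t).
Proof.
move=> t0.
have E w := regulatorsE (Lc w) (Uc w) (cz w) (ZE w) (Zab w) ab (cZ w) (incL w) (incU w) t0.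
have ub w := iter_bounded (Lc w) (Uc w) (cz w) (ZE w) (Zab w) t0.
split.
  apply: (eq_Fmeasurable (fun w => (E w).1)); apply: Fmeasurable_sup => [w|k].
    exact: (ub w).1.
  exact: (Fmeasurable_iter k t t0).1.
apply: (eq_Fmeasurable (fun w => (E w).2)); apply: Fmeasurable_sup => [w|k].
  exact: (ub w).2.
exact: (Fmeasurable_iter k t t0).2.
Qed.
End Regulators.
End Measurability.

Section Predictable.
Context {R : realType} {d : measure_display} {Omega : measurableType d}.

Definition grid_below (m : nat) (t : R) : R :=
  if 0 < t then (Num.ceil (t * m.+1%:R) - 1)%:~R / m.+1%:R else 0.

Lemma grid_belowP m t : 0 < t -> exists k : nat,
  [/\ grid_below m t = k%:R / m.+1%:R, k%:R / m.+1%:R < t & t <= k.+1%:R / m.+1%:R].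
Proof.
move=> t0; set N : R := m.+1%:R.
have N0 : 0 < N by rewrite ltr0Sn.
have /andP[ceil_lt le_ceil] := real_ceil_itv (num_real (t * N)).
have c0 : 0 < Num.ceil (t * N) by rewrite real_ceil_gt_int ?num_real // mulr_gt0.
exists `|Num.ceil (t * N) - 1|%N.
have kE : (`|Num.ceil (t * N) - 1|%N%:R : R) = (Num.ceil (t * N) - 1)%:~R.
  by rewrite natr_absz ger0_norm // subr_ge0.
have k1E : (`|Num.ceil (t * N) - 1|%N.+1%:R : R) = (Num.ceil (t * N))%:~R.
  by rewrite -natr1 kE intrD addrNK.
by rewrite /grid_below t0 kE k1E ltr_pdivrMr // ler_pdivlMr.
Qed.

Lemma grid_belowE m t (k : nat) : k%:R / m.+1%:R < t -> t <= k.+1%:R / m.+1%:R ->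
  grid_below m t = k%:R / m.+1%:R.
Proof.
move=> kt tk; have N0 : 0 < m.+1%:R :> R by rewrite ltr0Sn.
have t0 : 0 < t by apply: le_lt_trans kt; rewrite divr_ge0.
have k1 : k.+1%:Z - 1 = k%:Z by rewrite -addn1 PoszD addrK.
rewrite /grid_below t0 (_ : Num.ceil _ = k.+1%:Z) ?k1 -?pmulrn //.
by apply: ceil_def; rewrite k1 -!pmulrn -ltr_pdivrMr // -ler_pdivlMr // kt tk.
Qed.

Variable F : R -> set (set Omega).
Local Notation G := (predictable_rects F).

Lemma predictable_rects_time_domain E : G E -> E `<=` time_domain.
Proof.
move=> [[A [_ ->]]|[s [t [A [s0 _ _ ->]]]]] [u w] /= [].
  by move=> /= -> _; rewrite /time_domain /=.
by rewrite /time_domain /= in_itv /= => /andP[su _] _; apply: le_trans (ltW su).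
Qed.

Lemma predictable_trace E : E `<=` time_domain -> <<s G >> E -> <<s time_domain, G >> E.
Proof.
move=> ED sE.
pose S := [set A : set (R * Omega) | <<s time_domain, G >> (time_domain `&` A)].
have saS : sigma_algebra setT S.
  split=> [|A SA|A SA]; rewrite /S /=.
  - by rewrite setI0; exact: sigma_algebra0.
  - rewrite setTD -setDE; have -> : time_domain `\` A = time_domain `\` (time_domain `&` A).
      by rewrite setDIr setDv set0U.
    exact: sigma_algebraCD.
  - by rewrite setI_bigcupr; exact: sigma_algebra_bigcup.
have GS : G `<=` S.
  move=> A GA; rewrite /S /= (setIidr (predictable_rects_time_domain GA)).
  exact: sub_sigma_algebra.
by have := smallest_sub saS GS sE; rewrite /S /= (setIidr ED).
Qed.

Definition left_step (X : R -> Omega -> R) (m : nat) (p : R * Omega) : R :=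
  X (grid_below m p.1) p.2.

Lemma left_step_preimage (X : R -> Omega -> R) m B : (forall t, 0 <= t -> Fmeasurable F t (X t)) ->
  measurable B -> <<s G >> (time_domain `&` left_step X m @^-1` B).
Proof.
move=> mX mB; set N : R := m.+1%:R.
have N0 : 0 < N by rewrite ltr0Sn.
have -> : time_domain `&` left_step X m @^-1` B =
    ([set 0] `*` (X 0 @^-1` B)) `|`
    \bigcup_k (`]k%:R / N, k.+1%:R / N] `*` (X (k%:R / N) @^-1` B)).
  apply/seteqP; split=> [[t w]|[t w]] /=.
  - rewrite /time_domain /left_step /= => -[]; rewrite le_eqVlt => /orP[/eqP<-|t0].
      by rewrite /grid_below ltxx; left.
    have [k [-> kt tk]] := grid_belowP m t0.
    by right; exists k => //=; rewrite in_itv /= kt tk.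
  - move=> [[/= -> Bx]|[k _ [/=]]].
      by rewrite /time_domain /left_step /grid_below /= ltxx.
    rewrite in_itv /= => /andP[kt tk] Bx.
    split; first by apply: le_trans (ltW kt); rewrite divr_ge0.
    by rewrite /left_step /= (grid_belowE kt tk).
apply: (@measurableU _ (g_sigma_algebraType G)).
  by apply: sub_sigma_algebra; left; exists (X 0 @^-1` B); split => //; exact: mX.
apply: (@bigcup_measurable _ (g_sigma_algebraType G)) => k _; apply: sub_sigma_algebra.
right; exists (k%:R / N), (k.+1%:R / N), (X (k%:R / N) @^-1` B).
have k0 : 0 <= k%:R / N by rewrite divr_ge0.
by split => //; [rewrite ltr_pM2r ?invr_gt0 // ltr_nat|exact: mX].
Qed.

Lemma left_step_cvg (X : R -> Omega -> R) t w : 0 <= t -> {within `[0, +oo[, continuous X^~ w} ->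
  left_step X m (t, w) @[m --> \oo] --> X t w.
Proof.
rewrite le_eqVlt => /orP[/eqP <-|t0] cX.
  by rewrite /left_step /grid_below ltxx; exact: cvg_cst.
apply/cvgrPdist_lt => e e0.
have [del del0 Xdel] := continuous_halfline_dist cX (ltW t0) e0.
near=> m; have [k [gE kt tk]] := grid_belowP m t0.
rewrite /left_step /= gE distrC; apply: Xdel; first by rewrite divr_ge0.
rewrite ler0_norm ?subr_le0 ?(ltW kt) // opprB.
have : m.+1%:R^-1 < del by near: m; exact: (near_infty_natSinv_lt (PosNum del0)).
move: tk; rewrite -natr1 mulrDl mul1r.
by set q := k%:R / _; set r := m.+1%:R^-1; lra.
Unshelve. all: by end_near.
Qed.

Lemma adapted_continuous_predictable (X : R -> Omega -> R) : (forall t, 0 <= t -> Fmeasurable F t (X t)) ->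
  (forall w, {within `[0, +oo[, continuous X^~ w}) -> predictable F X.
Proof.
move=> mX cX B mB; apply: predictable_trace => [p []//|].
pose PT := g_sigma_algebraType G.
have mD : measurable (time_domain : set PT).
  by have := left_step_preimage 0 mX (@measurableT _ R); rewrite preimage_setT setIT.
have mstep m : measurable_fun (time_domain : set PT) (left_step X m).
  by move=> _ B' mB'; exact: left_step_preimage.
have mX' : measurable_fun (time_domain : set PT) (fun p : PT => X p.1 p.2).
  by apply: (measurable_fun_cvg mstep) => -[t w] t0; apply: left_step_cvg.
exact: mX' mD B mB.
Qed.
End Predictable.

Section ArbitragePath.
Context {R : realType}.
Implicit Types (S x y L U A B : R -> R) (w g t : R).

Definition log_mispricing w S x y t := ln (S t / poolP w (x t) (y t)).

Definition unregulated_mispricing w S x y t := ln (S t) - ln (poolP w (x 0) (y 0)).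

(* One path of the model: [A] (resp. [B]) is the cumulative increase (resp.
   decrease) of [ln x] due to arbitrage sales (resp. purchases) of X. *)
Record arbitrage_path w g S x y L U A B : Prop := ArbitragePath {
  weight_itv : 0 < w < 1;
  fee_itv : 0 < g < 1;
  S_gt0 : forall t, 0 <= t -> 0 < S t;
  S_continuous : {within `[0, +oo[, continuous S};
  x_gt0 : forall t, 0 <= t -> 0 < x t;
  y_gt0 : forall t, 0 <= t -> 0 < y t;
  A_cont_nondecr0 : cont_nondecr0 A;
  B_cont_nondecr0 : cont_nondecr0 B;
  lnx_AB : forall t, 0 <= t -> ln (x t) = ln (x 0) + A t - B t;
  lny_AB : forall t, 0 <= t ->
    ln (y t) = ln (y 0) - g * w / (1 - w) * A t + w / (g * (1 - w)) * B t;
  A_increases : increases_only_when A (log_mispricing w S x y) (ln g);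
  B_increases : increases_only_when B (log_mispricing w S x y) (- ln g);
  L_cont_nondecr0 : cont_nondecr0 L;
  U_cont_nondecr0 : cont_nondecr0 U;
  lnP_LU : forall t, 0 <= t ->
    ln (poolP w (x t) (y t)) = ln (poolP w (x 0) (y 0)) + U t - L t;
  mispricing_band : forall t, 0 <= t -> ln g <= log_mispricing w S x y t <= - ln g;
  L_increases : increases_only_when L (log_mispricing w S x y) (ln g);
  U_increases : increases_only_when U (log_mispricing w S x y) (- ln g) }.

Variables (w g : R) (S x y L U A B : R -> R).
Hypothesis P : arbitrage_path w g S x y L U A B.
Local Notation Z := (log_mispricing w S x y).
Local Notation z := (unregulated_mispricing w S x y).

Lemma poolP_gt0 t : 0 <= t -> 0 < poolP w (x t) (y t).
Proof.
move=> t0; have /andP[w0 w1] := weight_itv P.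
by rewrite /poolP !mulr_gt0 ?invr_gt0 ?subr_gt0 ?(x_gt0 P) ?(y_gt0 P).
Qed.

Lemma ln_poolP t : 0 <= t ->
  ln (poolP w (x t) (y t)) = ln (w / (1 - w)) + ln (y t) - ln (x t).
Proof.
move=> t0; have /andP[w0 w1] := weight_itv P.
have xt := x_gt0 P t0; have yt := y_gt0 P t0.
rewrite /poolP !lnM ?posrE ?invr_gt0 ?divr_gt0 ?subr_gt0 //.
by rewrite !lnV ?posrE ?subr_gt0 //; lra.
Qed.

Lemma log_mispricingE t : 0 <= t -> Z t = z t + L t - U t.
Proof.
move=> t0; have Pt := poolP_gt0 t0.
rewrite /log_mispricing lnM ?posrE ?invr_gt0 ?(S_gt0 P) // lnV ?posrE // (lnP_LU P) //.
by rewrite /unregulated_mispricing; lra.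
Qed.

Lemma unregulated_mispricing_continuous : {within `[0, +oo[, continuous z}.
Proof.
apply: within_continuousD; last exact: within_continuous_cst.
apply: within_continuous_comp (S_continuous P) => _ /set_mem[t + <-].
by rewrite /= in_itv /= andbT => /(S_gt0 P); exact: continuous_ln.
Qed.

Lemma log_mispricing_continuous : {within `[0, +oo[, continuous Z}.
Proof.
apply: (eq_within_continuous (f := fun t => z t + L t - U t)) => [t|].
  by rewrite /= in_itv /= andbT => /log_mispricingE.
apply: within_continuousD; last by apply: within_continuousN; case: (U_cont_nondecr0 P).
apply: within_continuousD; first exact: unregulated_mispricing_continuous.
by case: (L_cont_nondecr0 P).
Qed.

Lemma regulators_AB t : 0 <= t ->
  L t = (g * w / (1 - w) + 1) * A t /\ U t = (w / (g * (1 - w)) + 1) * B t.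
Proof.
have /andP[g0 g1] := fee_itv P.
have lng0 : ln g < 0 by rewrite -ln1 ltr_ln ?posrE.
have lng : ln g != - ln g by rewrite lt_eqF //; lra.
apply: (regulators_proportional lng (L_cont_nondecr0 P) (U_cont_nondecr0 P)
  (A_cont_nondecr0 P) (B_cont_nondecr0 P) (L_increases P) (A_increases P)
  (U_increases P) (B_increases P)) => r r0.
by have := lnP_LU P r0; rewrite !ln_poolP // (lnx_AB P r0) (lny_AB P r0); lra.
Qed.

Lemma ln_reserves_LU t : 0 <= t ->
  ln (x t) - ln (x 0) =
    (1 - w) / (1 - w + g * w) * L t - g * (1 - w) / (g * (1 - w) + w) * U t /\
  ln (y t) - ln (y 0) =
    w / (g * (1 - w) + w) * U t - g * w / (1 - w + g * w) * L t.
Proof.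
move=> t0; have /andP[w0 w1] := weight_itv P; have /andP[g0 g1] := fee_itv P.
have [-> ->] := regulators_AB t0; rewrite (lnx_AB P t0) (lny_AB P t0).
have w1' : 1 - w != 0 by rewrite subr_eq0 gt_eqF.
have xd : 1 - w + g * w != 0 by rewrite gt_eqF // addr_gt0 ?subr_gt0 ?mulr_gt0.
have yd : g * (1 - w) + w != 0 by rewrite gt_eqF // addr_gt0 ?mulr_gt0 ?subr_gt0.
by split; field; rewrite ?w1' ?xd ?yd ?gt_eqF.
Qed.

Lemma reserves_monotonicity :
  increases_only_when x Z (ln g) /\ decreases_only_when x Z (- ln g) /\
  increases_only_when y Z (- ln g) /\ decreases_only_when y Z (ln g).
Proof.
have /andP[w0 w1] := weight_itv P; have /andP[g0 g1] := fee_itv P.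
have kA : 0 <= g * w / (1 - w) by rewrite divr_ge0 ?mulr_ge0 ?subr_ge0 ?ltW.
have kB : 0 <= w / (g * (1 - w)) by rewrite divr_ge0 ?mulr_ge0 ?subr_ge0 ?ltW.
have [_ A_nondecr _] := A_cont_nondecr0 P; have [_ B_nondecr _] := B_cont_nondecr0 P.
split; [|split; [|split]] => t t0.
- move/(point_of_increase_ln t0 (x_gt0 P)).
  apply: (increases_only_when_dominated (k := 1) (A_cont_nondecr0 P) (A_increases P) _ t0).
  move=> r s r0 rs; have := B_nondecr _ _ r0 rs.
  by rewrite (lnx_AB P r0) (lnx_AB P (le_trans r0 rs)); lra.
- move/(point_of_decrease_ln t0 (x_gt0 P)).
  apply: (increases_only_when_dominated (k := 1) (B_cont_nondecr0 P) (B_increases P) _ t0).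
  move=> r s r0 rs; have := A_nondecr _ _ r0 rs.
  by rewrite (lnx_AB P r0) (lnx_AB P (le_trans r0 rs)); lra.
- move/(point_of_increase_ln t0 (y_gt0 P)).
  apply: (increases_only_when_dominated (k := w / (g * (1 - w))) (B_cont_nondecr0 P)
    (B_increases P) _ t0).
  move=> r s r0 rs; have : 0 <= g * w / (1 - w) * (A s - A r).
    by rewrite mulr_ge0 // subr_ge0 A_nondecr.
  by rewrite (lny_AB P r0) (lny_AB P (le_trans r0 rs)); lra.
- move/(point_of_decrease_ln t0 (y_gt0 P)).
  apply: (increases_only_when_dominated (k := g * w / (1 - w)) (A_cont_nondecr0 P)
    (A_increases P) _ t0).
  move=> r s r0 rs; have : 0 <= w / (g * (1 - w)) * (B s - B r).
    by rewrite mulr_ge0 // subr_ge0 B_nondecr.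
  by rewrite (lny_AB P r0) (lny_AB P (le_trans r0 rs)); lra.
Qed.

Lemma ln_x_continuous : {within `[0, +oo[, continuous (fun t => ln (x t))}.
Proof.
apply: (eq_within_continuous (f := fun t => ln (x 0) + A t - B t)) => [t|].
  by rewrite /= in_itv /= andbT => t0; rewrite (lnx_AB P t0).
apply: within_continuousD; last by apply: within_continuousN; case: (B_cont_nondecr0 P).
by apply: within_continuousD; [exact: within_continuous_cst|case: (A_cont_nondecr0 P)].
Qed.

Lemma ln_y_continuous : {within `[0, +oo[, continuous (fun t => ln (y t))}.
Proof.
apply: (eq_within_continuous
  (f := fun t => ln (y 0) - g * w / (1 - w) * A t + w / (g * (1 - w)) * B t)) => [t|].
  by rewrite /= in_itv /= andbT => t0; rewrite (lny_AB P t0).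
apply: within_continuousD; last by apply: within_continuousMl; case: (B_cont_nondecr0 P).
apply: within_continuousD; first exact: within_continuous_cst.
by apply/within_continuousN/within_continuousMl; case: (A_cont_nondecr0 P).
Qed.

Lemma ln_reserves_bounded_variation a b : 0 <= a -> a <= b ->
  bounded_variation a b (fun t => ln (x t)) /\ bounded_variation a b (fun t => ln (y t)).
Proof.
move=> a0 ab; have /andP[w0 w1] := weight_itv P; have /andP[g0 g1] := fee_itv P.
have [_ A_nondecr _] := A_cont_nondecr0 P; have [_ B_nondecr _] := B_cont_nondecr0 P.
have kA : 0 <= g * w / (1 - w) by rewrite divr_ge0 ?mulr_ge0 ?subr_ge0 ?ltW.
have kB : 0 <= w / (g * (1 - w)) by rewrite divr_ge0 ?mulr_ge0 ?subr_ge0 ?ltW.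
have in_itv0 r : r \in `[a, b] -> 0 <= r by rewrite in_itv /= => /andP[/(le_trans a0)].
split.
  apply: (bounded_variation_monotone_sum (g := B)) => // r s /in_itv0 r0 /in_itv0 s0 rs.
    by have := A_nondecr _ _ r0 rs; rewrite /= (lnx_AB P r0) (lnx_AB P s0); lra.
  exact: B_nondecr.
apply: (bounded_variation_monotone_sum (g := fun t => g * w / (1 - w) * A t)) => //.
  move=> r s /in_itv0 r0 /in_itv0 s0 rs; have := ler_wpM2l kB (B_nondecr _ _ r0 rs).
  by rewrite /= (lny_AB P r0) (lny_AB P s0); lra.
by move=> r s /in_itv0 r0 /in_itv0 s0 rs; rewrite ler_wpM2l // A_nondecr.
Qed.

Lemma reserves_continuous :
  {within `[0, +oo[, continuous x} /\ {within `[0, +oo[, continuous y}.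
Proof.
split; apply: within_continuous_ln.
- exact: (x_gt0 P).
- exact: ln_x_continuous.
- exact: (y_gt0 P).
- exact: ln_y_continuous.
Qed.
End ArbitragePath.

Section Reserves.
Local Unset Implicit Arguments.
Context {R : realType} {d : measure_display} {Omega : measurableType d}.
Variables (F : R -> set (set Omega)) (w g : R) (S x y L U A B : R -> Omega -> R).
Hypothesis HF : filtration F.
Hypothesis g_itv : 0 < g < 1.
Hypothesis S_adapted : adapted F S.
Hypotheses (x0_measurable : Fmeasurable F 0 (x 0)) (y0_measurable : Fmeasurable F 0 (y 0)).
Hypothesis P : forall om, arbitrage_path w g (S^~ om) (x^~ om) (y^~ om)
  (L^~ om) (U^~ om) (A^~ om) (B^~ om).

Lemma unregulated_mispricing_adapted s : 0 <= s ->
  Fmeasurable F s (fun om => unregulated_mispricing w (S^~ om) (x^~ om) (y^~ om) s).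
Proof.
move=> s0; apply: (FmeasurableD HF); first exact/(Fmeasurable_ln HF)/S_adapted.
apply/(FmeasurableN HF)/(Fmeasurable_mono HF s0).
apply: (eq_Fmeasurable (fun om => esym (ln_poolP (P om) (lexx 0)))).
apply: (FmeasurableD HF); last exact/(FmeasurableN HF)/(Fmeasurable_ln HF).
apply: (FmeasurableD HF); first exact: Fmeasurable_cst.
exact: Fmeasurable_ln.
Qed.

Lemma regulators_adapted t : 0 <= t -> Fmeasurable F t (L t) /\ Fmeasurable F t (U t).
Proof.
have /andP[g0 g1] := g_itv.
have lng : ln g < 0 by rewrite -ln1 ltr_ln ?posrE.
apply: (Fmeasurable_regulators F HF _ (fun s om => log_mispricing w (S^~ om) (x^~ om) (y^~ om) s)
  L U _ _ unregulated_mispricing_adapted) => [om|om|om|om t0|om t0||om|om|om].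
- exact: L_cont_nondecr0 (P om).
- exact: U_cont_nondecr0 (P om).
- exact: unregulated_mispricing_continuous (P om).
- exact: log_mispricingE (P om) t0.
- exact: mispricing_band (P om) t0.
- lra.
- exact: log_mispricing_continuous (P om).
- exact: L_increases (P om).
- exact: U_increases (P om).
Qed.

Lemma reserves_adapted t : 0 <= t -> Fmeasurable F t (x t) /\ Fmeasurable F t (y t).
Proof.
move=> t0; have [Lt Ut] := regulators_adapted t t0.
split.
  apply: (Fmeasurable_of_ln HF t0 (fun om => x_gt0 (P om) t0) x0_measurable _
    (fun om => (ln_reserves_LU (P om) t0).1)).
  by apply: (FmeasurableD HF); [|apply: (FmeasurableN HF)]; apply: (FmeasurableMl HF).
apply: (Fmeasurable_of_ln HF t0 (fun om => y_gt0 (P om) t0) y0_measurable _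
  (fun om => (ln_reserves_LU (P om) t0).2)).
by apply: (FmeasurableD HF); [|apply: (FmeasurableN HF)]; apply: (FmeasurableMl HF).
Qed.

Lemma reserves_predictable : predictable F x /\ predictable F y.
Proof.
split; (apply: adapted_continuous_predictable => [t t0|om]).
- exact: (reserves_adapted t t0).1.
- exact: (reserves_continuous (P om)).1.
- exact: (reserves_adapted t t0).2.
- exact: (reserves_continuous (P om)).2.
Qed.
End Reserves.

Theorem mainTheorem3 (R : realType) (d : measure_display) (Omega : measurableType d)
  (F : R -> set (set Omega))
  (w g : R) (x y S L U A B : R -> Omega -> R) :
  filtration F ->
  0 < w < 1 -> 0 < g < 1 ->
  (* reference price: adapted, positive, continuous *)
  adapted F S ->
  (forall t om, 0 <= t -> 0 < S t om) ->
  (forall om, {within `[0, +oo[, continuous (S^~ om)}) ->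
  (* initial reserves known at time 0 *)
  (forall B0 : set R, measurable B0 -> F 0 (x 0 @^-1` B0)) ->
  (forall B0 : set R, measurable B0 -> F 0 (y 0 @^-1` B0)) ->
  (forall t om, 0 <= t -> 0 < x t om /\ 0 < y t om) ->
  (* initial band condition *)
  (forall om, g * poolP w (x 0 om) (y 0 om) <= S 0 om <= poolP w (x 0 om) (y 0 om) / g) ->
  (* no noise traders: reserves change only through continuous arbitrage
     trades; A = cumulative d ln x from sales of X to the pool (dx > 0),
     B = cumulative -d ln x from purchases of X from the pool (dx < 0),
     with g w dx/x + (1-w) dy/y = 0 on sales, w dx/x + g (1-w) dy/y = 0
     on purchases *)
  (forall om, cont_nondecr0 (A^~ om) /\ cont_nondecr0 (B^~ om)) ->
  (forall t om, 0 <= t ->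
     ln (x t om) = ln (x 0 om) + A t om - B t om /\
     ln (y t om) = ln (y 0 om) - g * w / (1 - w) * A t om
                               + w / (g * (1 - w)) * B t om) ->
  (* continuous instantaneous arbitrage: X is sold to the pool only when
     S/P = g and bought from the pool only when S/P = 1/g *)
  (forall om, increases_only_when (A^~ om)
     (fun t => ln (S t om / poolP w (x t om) (y t om))) (ln g)) ->
  (forall om, increases_only_when (B^~ om)
     (fun t => ln (S t om / poolP w (x t om) (y t om))) (- ln g)) ->
  (* the decomposition ln P_t = ln P_0 + U_t - L_t *)
  (forall om, cont_nondecr0 (L^~ om) /\ cont_nondecr0 (U^~ om)) ->
  (forall t om, 0 <= t ->
     ln (poolP w (x t om) (y t om)) =
       ln (poolP w (x 0 om) (y 0 om)) + U t om - L t om) ->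
  (forall t om, 0 <= t ->
     ln g <= ln (S t om / poolP w (x t om) (y t om)) <= - ln g) ->
  (forall om, increases_only_when (L^~ om)
     (fun t => ln (S t om / poolP w (x t om) (y t om))) (ln g)) ->
  (forall om, increases_only_when (U^~ om)
     (fun t => ln (S t om / poolP w (x t om) (y t om))) (- ln g)) ->
  let Z t om := ln (S t om / poolP w (x t om) (y t om)) in
  (* (a) *)
  (predictable F x /\ predictable F y) /\
  (* (b) *)
  (forall om,
     increases_only_when (x^~ om) (Z^~ om) (ln g) /\
     decreases_only_when (x^~ om) (Z^~ om) (- ln g) /\
     increases_only_when (y^~ om) (Z^~ om) (- ln g) /\
     decreases_only_when (y^~ om) (Z^~ om) (ln g)) /\
  (* (c) *)
  (forall om,
     {within `[0, +oo[, continuous (fun t => ln (x t om))} /\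
     {within `[0, +oo[, continuous (fun t => ln (y t om))} /\
     (forall a b, 0 <= a -> a <= b ->
        bounded_variation a b (fun t => ln (x t om)) /\
        bounded_variation a b (fun t => ln (y t om)))) /\
  (* (d), in integrated form (L_0 = U_0 = 0) *)
  (forall t om, 0 <= t ->
     ln (x t om) - ln (x 0 om) =
       (1 - w) / (1 - w + g * w) * L t om
       - g * (1 - w) / (g * (1 - w) + w) * U t om /\
     ln (y t om) - ln (y 0 om) =
       w / (g * (1 - w) + w) * U t om
       - g * w / (1 - w + g * w) * L t om).
Proof.
(* The initial band condition is the case t = 0 of [Z_band]. *)
move=> HF w_itv g_itv S_adapted S_gt0 S_cont x0_meas y0_meas xy_gt0 _ AB_cont lnxy_AB
  A_incr B_incr LU_cont lnP_LU Z_band L_incr U_incr Z.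
have P om : arbitrage_path w g (S^~ om) (x^~ om) (y^~ om)
    (L^~ om) (U^~ om) (A^~ om) (B^~ om) :=
  ArbitragePath w_itv g_itv (S_gt0^~ om) (S_cont om) (fun t t0 => (xy_gt0 t om t0).1)
    (fun t t0 => (xy_gt0 t om t0).2) (AB_cont om).1 (AB_cont om).2
    (fun t t0 => (lnxy_AB t om t0).1) (fun t t0 => (lnxy_AB t om t0).2) (A_incr om) (B_incr om)
    (LU_cont om).1 (LU_cont om).2 (lnP_LU^~ om) (Z_band^~ om) (L_incr om) (U_incr om).
split; first exact: reserves_predictable HF g_itv S_adapted x0_meas y0_meas P.
split; first by move=> om; exact: reserves_monotonicity (P om).
split; last by move=> t om t0; exact: (ln_reserves_LU (P om) t0).
move=> om; split; first exact: ln_x_continuous (P om).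
by split; [exact: ln_y_continuous (P om)|exact: ln_reserves_bounded_variation (P om)].
Qed.
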